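(* Let $K$ be a construction of an ASC-hypergraph $H$ and let $Y\in H\setminus K$. Then there is $X\in K$ with $Y\subsetneq X$ such that some $X$-superficial element $x$ (relative to $K$) satisfies $x\in Y$.
   Context: A hypergraph is a finite set $H$ of nonempty subsets of some finite set; its carrier is $\bigcup H$. For a family $F$ and set $Y$, $F_Y=\{X\in F\mid X\subseteq Y\}$. A hypergraph partition of $H$ is a partition $\{H_1,\dots,H_n\}$ ($n\ge0$) of the set $H$ with $\{\bigcup H_1,\dots,\bigcup H_n\}$ a partition of $\bigcup H$; $H$ is connected if it has exactly one hypergraph partition; the finest hypergraph partition is the unique one whose blocks are connected. $H$ is atomic if $\{x\}\in H$ for all $x\in\bigcup H$; saturated if $X_1,X_2\in H$ with $X_1\cap X_2\neq\emptyset$ imply $X_1\cup X_2\in H$. An ASC-hypergraph is one that is atomic, saturated and connected. Constructions of an atomic $H$, by induction on $|\bigcup H|$: (0) $\emptyset$ is the only construction of $\emptyset$; (1) if $|\bigcup H|\ge1$, $H$ connected, $x\in\bigcup H$, $K$ a construction of $H_{\bigcup H\setminus\{x\}}$, then $K\cup\{\bigcup H\}$ is a construction of $H$; (2) if $H$ is not connected with finest hypergraph partition $\{H_1,\dots,H_n\}$, $n\ge2$, and $K_i$ is a construction of $H_i$, then $K_1\cup\dots\cup K_n$ is a construction of $H$. For $X\in K$, an element $x\in X$ is $X$-superficial (relative to $K$) if $x\notin Z$ for every $Z\in K$ that is a proper subset of $X$. *)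

From mathcomp Require Import all_boot.
Set Implicit Arguments. Unset Strict Implicit. Unset Printing Implicit Defensive.

Section Hyper.
Variable T : finType.
Implicit Types (H K F : {set {set T}}) (X Y : {set T}) (P : {set {set {set T}}}).

(* A hypergraph: a finite set of nonempty subsets; carrier = cover H. *)
Definition hypergraph H : bool := set0 \notin H.

Definition restrict F Y : {set {set T}} := [set X in F | X \subset Y].

(* A hypergraph partition of H: a partition {H_1..H_n} of the set H such that
   the unions of distinct blocks are pairwise disjoint (so that
   {U H_1, ..., U H_n} is a partition of U H). *)
Definition hpartition H P : bool :=
  partition P H &&
  [forall B1 in P, forall B2 in P, (B1 != B2) ==> [disjoint cover B1 & cover B2]].

Definition connected H : Prop := exists! P, hpartition H P.

Definition atomic H : Prop := forall x, x \in cover H -> [set x] \in H.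

Definition saturated H : Prop :=
  forall X1 X2, X1 \in H -> X2 \in H -> X1 :&: X2 != set0 -> X1 :|: X2 \in H.

Definition ASC H : Prop := atomic H /\ saturated H /\ connected H.

(* Constructions (for atomic H; subhypergraphs F_Y and blocks of partitions
   of atomic hypergraphs are again atomic). *)
Inductive construction : {set {set T}} -> {set {set T}} -> Prop :=
| constr0 : construction set0 set0
| constr1 H x K :
    connected H -> x \in cover H ->
    construction (restrict H (cover H :\ x)) K ->
    construction H (cover H |: K)
| constr2 H P (Ks : {set {set T}} -> {set {set T}}) :
    ~ connected H ->
    hpartition H P ->
    (forall B, B \in P -> connected B) ->
    1 < #|P| ->
    (forall B, B \in P -> construction B (Ks B)) ->
    construction H (\bigcup_(B in P) Ks B).

Definition superficial K X (x : T) : Prop :=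
  x \in X /\ forall Z, Z \in K -> Z \proper X -> x \notin Z.

End Hyper.

From mathcomp Require Import all_boot.
Set Implicit Arguments. Unset Strict Implicit. Unset Printing Implicit Defensive.

(* A new top set cover H is added only in
   step (1): if x \in Y, then cover H itself works, x being superficial since
   the rest of the construction lives in cover H :\ x; otherwise Y lies in the
   restricted hypergraph and the witness from the induction hypothesis stays
   superficial, as no member of the construction is a proper superset of
   cover H.  In step (2), Y lies in a single block B, and the constructions of
   the other blocks live in covers disjoint from cover B, so they cannot
   contain the superficial element. *)

Section Superficial.
Variable T : finType.
Implicit Types (H K : {set {set T}}) (W X Y Z : {set T}) (x : T).

Lemma cover_restrict H Y : cover (restrict H Y) \subset Y.
Proof. by apply/bigcupsP=> Z; rewrite inE => /andP[]. Qed.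

Lemma sub_cover H Y : Y \in H -> Y \subset cover H.
Proof. exact: bigcup_sup. Qed.

Lemma hpartition_cover H P : hpartition H P -> cover P = H.
Proof. by case/andP=> /cover_partition. Qed.

Lemma hpartition_disjoint H P B B' :
  hpartition H P -> B \in P -> B' \in P -> B != B' ->
  [disjoint cover B & cover B'].
Proof.
case/andP=> _ /forallP/(_ B)/implyP dis BP B'P.
by move: (dis BP) => /forallP/(_ B')/implyP/(_ B'P)/implyP.
Qed.

Lemma construction_sub_cover H K Z : construction H K -> Z \in K -> Z \subset cover H.
Proof.
move=> C; elim: C Z => {H K} [|H x K _ _ _ IH|H P Ks _ hP _ _ _ IH] Z.
- by rewrite inE.
- rewrite in_setU1 => /orP[/eqP -> //|/IH ZK].
  exact: subset_trans ZK (subset_trans (cover_restrict _ _) (subD1set _ _)).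
- case/bigcupP=> B BP /IH -/(_ BP) ZB.
  apply: subset_trans ZB _; apply/bigcupsP=> W WB; apply: sub_cover.
  by rewrite -(hpartition_cover hP); apply/bigcupP; exists B.
Qed.

Lemma superficial_setU1_top K X x :
  x \in X -> (forall Z, Z \in K -> x \notin Z) -> superficial (X |: K) X x.
Proof.
move=> xX xK; split=> // Z; rewrite in_setU1 => /orP[/eqP ->|/xK //].
by rewrite properxx.
Qed.

Lemma superficial_setU1 K X W x :
  ~~ (W \proper X) -> superficial K X x -> superficial (W |: K) X x.
Proof.
move=> WX [xX sup]; split=> // Z; rewrite in_setU1 => /orP[/eqP -> |/sup //].
by rewrite (negbTE WX).
Qed.

Lemma superficial_bigcup (I : finType) (P : {pred I}) (Ks : I -> {set {set T}})
    i X x :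
  (forall j, P j -> j != i -> forall Z, Z \in Ks j -> x \notin Z) ->
  superficial (Ks i) X x -> superficial (\bigcup_(j | P j) Ks j) X x.
Proof.
move=> others [xX sup]; split=> // Z /bigcupP[j Pj ZKj].
have [eji|ji] := eqVneq j i; first by rewrite eji in ZKj; exact: sup.
by move=> _; exact: others ZKj.
Qed.

Definition superficial_above K Y : Prop :=
  exists X, [/\ X \in K, Y \proper X & exists x, superficial K X x /\ x \in Y].

Lemma construction_superficial_above H K Y :
  construction H K -> Y \in H -> Y \notin K -> superficial_above K Y.
Proof.
move=> C; elim: C Y => {H K} [|H x K _ _ CK IH|H P Ks _ hP _ _ CB IH] Y YH.
- by rewrite inE in YH.
- rewrite in_setU1 negb_or => /andP[YnH YnK].
  have YsH := sub_cover YH.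
  have KsD Z : Z \in K -> Z \subset cover H :\ x.
    by move/(construction_sub_cover CK)/subset_trans; apply; apply: cover_restrict.
  have xnK Z : Z \in K -> x \notin Z.
    by move/KsD/subsetP=> ZsD; apply/negP=> /ZsD; rewrite in_setD1 eqxx.
  have [xY | xnY] := boolP (x \in Y).
    exists (cover H); split; first exact: setU11.
    + by rewrite properEneq YnH YsH.
    + by exists x; split=> //; apply: superficial_setU1_top => //; exact: subsetP YsH x xY.
  have YR : Y \in restrict H (cover H :\ x) by rewrite inE YH subsetD1 YsH xnY.
  have [X [XK YX [x' [sup x'Y]]]] := IH Y YR YnK.
  exists X; split=> //; first by rewrite in_setU1 XK orbT.
  exists x'; split=> //; apply: superficial_setU1 sup.
  have XsH : X \subset cover H.
    exact: subset_trans (KsD X XK) (subD1set _ _).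
  by apply/negP=> /proper_sub_trans /(_ XsH); rewrite properxx.
- move=> YnK; move: YH; rewrite -(hpartition_cover hP) => /bigcupP[B BP YB].
  have YnB : Y \notin Ks B by apply: contra YnK => YK; apply/bigcupP; exists B.
  have [X [XK YX [x [sup xY]]]] := IH B BP Y YB YnB.
  exists X; split=> //; first by apply/bigcupP; exists B.
  have xB : x \in cover B := subsetP (construction_sub_cover (CB B BP) XK) x sup.1.
  exists x; split=> //; apply: superficial_bigcup sup => B' B'P nB Z ZK.
  have disBB' : [disjoint cover B & cover B'].
    by apply: hpartition_disjoint hP BP B'P _; rewrite eq_sym.
  apply/negP=> /(subsetP (construction_sub_cover (CB B' B'P) ZK)).
  by rewrite (disjointFr disBB' xB).
Qed.

End Superficial.

Theorem lemma6p14 (T : finType) (H K : {set {set T}}) (Y : {set T}) :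
  hypergraph H -> ASC H -> construction H K -> Y \in H :\: K ->
  exists X, [/\ X \in K, Y \proper X & exists x, superficial K X x /\ x \in Y].
Proof.
move=> _ _ C; rewrite inE => /andP[YnK YH].
exact: construction_superficial_above C YH YnK.
Qed.
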